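(* Let $E$ be a countable set, $V$ a topological vector space over a field $k$, $f:E\to V$ a function, and $M_f=(E,\mathcal{L}(f))$ the associated topological independence system. An independent set $S\in\mathcal{L}(f)$ is maximal in $\mathcal{L}(f)$ if and only if $f(e)\in\hat f(C_S(f))$ for every $e\in E$.
   Context: Let $C(f)$ be the set of $c\in k^E$ such that the sum $\sum_{e\in E}c(e)f(e)$ converges in the topology of $V$ (meaning that one of its sequences of partial sums converges absolutely), and define $\hat f:C(f)\to V$ by $\hat f(c)=\sum_{e\in E}c(e)f(e)$. For $S\subseteq E$ let $C_S(f)=\{c\in C(f): c(e)=0 \text{ for all } e\in E\setminus S\}$ and let $\hat f|_S$ be the restriction of $\hat f$ to $C_S(f)$. Then $\mathcal{L}(f)=\{S\subseteq E: \ker(\hat f|_S)=\{0\}\}$, and $M_f=(E,\mathcal{L}(f))$ is called a topological independence system. Maximality is with respect to inclusion. *)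

From HB Require Import structures.
From mathcomp Require Import all_boot all_order all_algebra.
From mathcomp Require Import boolp classical_sets topology.
Set Implicit Arguments. Unset Strict Implicit. Unset Printing Implicit Defensive.
Import Order.TTheory GRing.Theory Num.Theory.
Local Open Scope classical_set_scope.
Local Open Scope ring_scope.

#[short(type="topZmodType")]
HB.structure Definition TopZmod := {V of GRing.Zmodule V & Topological V}.

(* An lmodule over k carrying a topology (continuity axioms as hypotheses). *)
#[short(type="topLmodType")]
HB.structure Definition TopLmod (k : fieldType) :=
  {V of GRing.Lmodule k V & Topological V}.

(* A field carrying a topology (continuity axioms are stated as hypotheses). *)
#[short(type="topFieldType")]
HB.structure Definition TopField := {K of GRing.Field K & Topological K}.

Definition is_topological_field (k : topFieldType) : Prop :=
  [/\ continuous (fun p : k * k => p.1 + p.2),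
      continuous (fun p : k * k => p.1 * p.2),
      continuous (fun x : k => - x)
    & forall x : k, x != 0 -> {for x, continuous (fun y : k => y^-1)}].

Definition is_tvs (k : topFieldType) (V : topLmodType k) : Prop :=
  continuous (fun p : V * V => p.1 + p.2) /\
  continuous (fun p : k * V => p.1 *: p.2).

(* An enumeration of the countable set E: every element occurs exactly once,
   the remaining positions (if E is finite) are padded with None. *)
Definition enumeration (E : Type) (s : nat -> option E) : Prop :=
  (forall e, exists i, s i = Some e) /\
  (forall i j e, s i = Some e -> s j = Some e -> i = j).

Definition oterm (E : Type) (k : fieldType) (V : lmodType k)
  (f : E -> V) (c : E -> k) (x : option E) : V :=
  match x with Some e => c e *: f e | None => 0 end.

(* \sum_{e in E} c(e) f(e) converges (unconditionally) to v: the partial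
   sums along every enumeration of E converge to v. *)
Definition sums_to (E : Type) (k : topFieldType) (V : topLmodType k)
  (f : E -> V) (c : E -> k) (v : V) : Prop :=
  forall s : nat -> option E, enumeration s ->
    (fun n => \sum_(i < n) oterm f c (s i)) @ \oo --> v.

Definition Cf (E : Type) (k : topFieldType) (V : topLmodType k)
  (f : E -> V) : set (E -> k) := [set c | exists v, sums_to f c v].

Definition CSf (E : Type) (k : topFieldType) (V : topLmodType k)
  (f : E -> V) (S : set E) : set (E -> k) :=
  [set c | Cf f c /\ forall e, ~ S e -> c e = 0].

Definition hatf_image (E : Type) (k : topFieldType) (V : topLmodType k)
  (f : E -> V) (S : set E) : set V :=
  [set v | exists2 c, CSf f S c & sums_to f c v].

Definition Lf (E : Type) (k : topFieldType) (V : topLmodType k)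
  (f : E -> V) : set (set E) :=
  [set S | forall c, CSf f S c -> sums_to f c 0 -> c = (fun _ => 0)].

Definition maximal_in (E : Type) (L : set (set E)) (S : set E) : Prop :=
  L S /\ forall T, L T -> S `<=` T -> T = S.

From HB Require Import structures.
From mathcomp Require Import all_boot all_order all_algebra.
From mathcomp Require Import boolp classical_sets topology.
Import GRing.Theory.
Local Open Scope classical_set_scope.
Local Open Scope ring_scope.

(* Maximality of [S] is equivalent to: for every [e], the set [S ∪ {e}] is
   either [S] itself or dependent.  A dependence relation [c] on [S ∪ {e}]
   must charge [e], since [S] is independent, and dividing by [c e] expresses
   [f e] as a convergent combination supported on [S].  Conversely, if
   [f e = \hat f(c)] with [c] supported on [S] and [e ∉ S], then [c - δ_e] is
   a nonzero element of the kernel on any [T ⊇ S ∪ {e}]. *)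

Section TvsLimits.
Context {k : topFieldType} {V : topLmodType k} (hV : is_tvs V).

Lemma tvs_cvgD {u w : nat -> V} {a b : V} :
  u @ \oo --> a -> w @ \oo --> b -> (fun n => u n + w n) @ \oo --> a + b.
Proof.
move=> ua wb; have uwab : (fun n => (u n, w n)) @ \oo --> (a, b).
  exact: cvg_pair.
exact: continuous_cvg (hV.1 (a, b)) uwab.
Qed.

Lemma tvs_cvgZ (t : k) {w : nat -> V} {b : V} :
  w @ \oo --> b -> (fun n => t *: w n) @ \oo --> t *: b.
Proof.
move=> wb; have twtb : (fun n => (t, w n)) @ \oo --> (t, b).
  by apply: cvg_pair => //; exact: cvg_cst.
exact: continuous_cvg (hV.2 (t, b)) twtb.
Qed.

Lemma sums_toDZ {E : Type} {f : E -> V} {c d : E -> k} {u v : V} (t : k) :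
  sums_to f c u -> sums_to f d v ->
  sums_to f (fun x => c x + t * d x) (u + t *: v).
Proof.
move=> cu dv s s_enum.
suff -> : (fun n => \sum_(i < n) oterm f (fun x => c x + t * d x) (s i)) =
    (fun n => \sum_(i < n) oterm f c (s i) + t *: \sum_(i < n) oterm f d (s i)).
  exact: tvs_cvgD (cu s s_enum) (tvs_cvgZ t (dv s s_enum)).
apply: funext => n.
rewrite scaler_sumr -big_split; apply: eq_bigr => i _.
by case: (s i) => [e|] /=; rewrite ?scalerDl ?scalerA ?scaler0 ?addr0.
Qed.

End TvsLimits.

Section UnitCoefficients.
Context {E : eqType} {k : topFieldType} {V : topLmodType k}.
Implicit Types (f : E -> V) (S T : set E) (e : E).

Definition unit_coef e : E -> k := fun x => (x == e)%:R.

Lemma sums_to_unit_coef f e : sums_to f (unit_coef e) (f e).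
Proof.
move=> s [s_onto s_inj]; have [i0 si0] := s_onto e.
have term_i i : oterm f (unit_coef e) (s i) = if i == i0 then f e else 0.
  case: eqP => [->|ne]; first by rewrite si0 /= /unit_coef eqxx scale1r.
  case si: (s i) => [x|] //=; rewrite /unit_coef.
  by case: eqP => [xe|_]; [case: ne; apply: s_inj si _; rewrite xe | rewrite scale0r].
apply: cvg_near_cst; exists i0.+1 => // n /= i0n.
rewrite (bigD1 (Ordinal i0n)) //= term_i eqxx big1 ?addr0 // => i ne.
rewrite term_i; case: eqP => // ii0; case/eqP: ne; exact: val_inj.
Qed.

Lemma hatf_image_mem f S e : S e -> hatf_image f S (f e).
Proof.
move=> Se; exists (unit_coef e); last exact: sums_to_unit_coef.
split; first by exists (f e); exact: sums_to_unit_coef.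
by move=> x Sx; rewrite /unit_coef; case: eqP => // xe; rewrite xe in Sx.
Qed.

Hypothesis hV : is_tvs V.

Lemma hatf_image_setU1 f S e :
  Lf f S -> ~ Lf f (S `|` [set e]) -> hatf_image f S (f e).
Proof.
move=> LS /existsNP[c /not_implyP[cSe /not_implyP[c0 c_ne0]]].
have c_supp := cSe.2.
have ce_neq0 : c e != 0.
  apply/eqP => ce0; apply: c_ne0; apply: (LS c _ c0); split; first by exists 0.
  by move=> x Sx; case: (pselect (x = e)) => [->|xe]; last by apply: c_supp; case.
have := sums_toDZ hV (- (c e)^-1) (sums_to_unit_coef f e) c0.
rewrite scaler0 addr0 => fe_sum.
exists (fun x => unit_coef e x + - (c e)^-1 * c x) => //.
split; first by exists (f e).
move=> x Sx; rewrite /unit_coef; case: eqP => [->|xe].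
  by rewrite mulNr mulVf // subrr.
by rewrite (c_supp x) ?mulr0 ?addr0; last by case.
Qed.

Lemma Lf_hatf_image_subset f S T e :
  Lf f T -> S `<=` T -> hatf_image f S (f e) -> T e -> S e.
Proof.
move=> LT ST [c [_ c_supp] c_fe] Te; apply: contrapT => Se.
have := sums_toDZ hV (-1) c_fe (sums_to_unit_coef f e).
rewrite scaleN1r subrr => c_ker.
have cT : CSf f T (fun x => c x + -1 * unit_coef e x).
  split; first by exists 0.
  move=> x Tx; rewrite /unit_coef; case: eqP => [xe|_]; first by rewrite xe in Tx.
  by rewrite c_supp ?mulr0 ?addr0 // => /ST.
move: (LT _ cT c_ker) => /(congr1 (fun g => g e)).
by rewrite /unit_coef eqxx c_supp // mulr1 add0r => /eqP; rewrite oppr_eq0 oner_eq0.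
Qed.

End UnitCoefficients.

Theorem theorem6p2p1 (E : countType) (k : topFieldType) (V : topLmodType k)
  (hk : is_topological_field k) (hV : is_tvs V) (f : E -> V) (S : set E) :
  Lf f S -> (maximal_in (Lf f) S <-> forall e : E, hatf_image f S (f e)).
Proof.
move=> LS; split.
- move=> [_ S_max] e; case: (pselect (Lf f (S `|` [set e]))) => [LSe|].
  + have <- := S_max _ LSe (@subsetUl _ S [set e]).
    by apply: hatf_image_mem; right.
  + exact: hatf_image_setU1.
- move=> S_spans; split => // T LT ST; apply/seteqP; split => // e.
  exact: Lf_hatf_image_subset LT ST (S_spans e).
Qed.
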